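(* Let $W_0\in\mathcal{W}$, let $s_0\in\mathbb{R}^{|I||J|}$ be a fixed vector and $S_0\in\mathbb{R}^{|I||J|\times|I||J|}$ a fixed matrix, and consider the linear assignment flow $$\dot W=\Pi_W\Big(s_0+S_0\,\Pi_{W_0}\log\frac{W}{W_0}\Big),\qquad W(0)=W_0 .$$ Then its solution admits the representation $$W(t)=\mathrm{Exp}_{W_0}\big(V(t)\big),$$ where $V(t)\in\mathcal{T}_0$ solves the linear ODE $$\dot V=\Pi_{W_0}(s_0+S_0V),\qquad V(0)=0 .$$
   Context: Let $I,J$ be finite index sets. Operations on vectors (products, quotients, $\log$, $e^{(\cdot)}$) are componentwise. $\mathcal{S}=\{p\in\mathbb{R}^{|J|}: p_j>0,\ \langle\mathbb{1},p\rangle=1\}$, $T_0=\{v\in\mathbb{R}^{|J|}:\langle\mathbb{1},v\rangle=0\}$. For $p\in\mathcal{S}$, $\Pi_p(z)=(\mathrm{Diag}(p)-pp^\top)z$ and $\mathrm{Exp}_p:T_0\to\mathcal{S}$, $\mathrm{Exp}_p(v)=\frac{p\,e^{v/p}}{\langle p,e^{v/p}\rangle}$ (whose inverse is $q\mapsto\Pi_p\log\frac{q}{p}$). The assignment manifold is $\mathcal{W}=\mathcal{S}^{|I|}$ with points $W=(W_i)_{i\in I}$, and $\mathcal{T}_0=T_0^{|I|}$; the maps $\Pi_W$ and $\mathrm{Exp}_W$ act blockwise: $(\Pi_WZ)_i=\Pi_{W_i}Z_i$, $(\mathrm{Exp}_W V)_i=\mathrm{Exp}_{W_i}(V_i)$.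 *)

From HB Require Import structures.
From mathcomp Require Import all_boot all_order all_algebra.
From mathcomp Require Import all_classical all_reals all_analysis.
Set Implicit Arguments. Unset Strict Implicit. Unset Printing Implicit Defensive.
Import Order.TTheory GRing.Theory Num.Theory.
Local Open Scope ring_scope.

(* Index sets I = 'I_m, J = 'I_n.  A point W of the assignment manifold
   (or a tangent vector, or an element of R^{|I||J|}) is an m x n matrix
   whose i-th row is W_i. *)
Section Assignment.
Variables (R : realType) (m n : nat).

Definition in_simplex (p : 'rV[R]_n) : Prop :=
  (forall j, 0 < p 0 j) /\ \sum_j p 0 j = 1.

Definition in_assign (W : 'M[R]_(m, n)) : Prop :=
  forall i, in_simplex (row i W).

Definition in_tangent0 (V : 'M[R]_(m, n)) : Prop :=
  forall i, \sum_j V i j = 0.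

(* (Pi_W Z)_i = (Diag(W_i) - W_i W_i^T) Z_i *)
Definition PiW (W Z : 'M[R]_(m, n)) : 'M[R]_(m, n) :=
  \matrix_(i, j) (W i j * Z i j - W i j * \sum_k W i k * Z i k).

Definition ExpW (W V : 'M[R]_(m, n)) : 'M[R]_(m, n) :=
  \matrix_(i, j) (W i j * expR (V i j / W i j) /
                  \sum_k W i k * expR (V i k / W i k)).

Definition logratio (W W0 : 'M[R]_(m, n)) : 'M[R]_(m, n) :=
  \matrix_(i, j) ln (W i j / W0 i j).

(* action of a |I||J| x |I||J| matrix S on a vector of R^{|I||J|},
   the vector being identified with an m x n matrix via mxvec *)
Definition applyS (S : 'M[R]_(m * n)) (V : 'M[R]_(m, n)) : 'M[R]_(m, n) :=
  vec_mx (mxvec V *m S^T).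

End Assignment.

From HB Require Import structures.
From mathcomp Require Import all_boot all_order all_algebra.
From mathcomp Require Import all_classical all_reals all_analysis.
From mathcomp Require Import ring lra.
Import Order.TTheory GRing.Theory Num.Theory.
Local Open Scope ring_scope.

(* Along the flow, Y := Pi_W0 log(W / W0) solves the same linear ODE as V:
   rowwise d/dt log(W / W0) = Pi_W Z / W = Z - <W, Z> 1, and Pi_W0 kills the
   constant rows.  So D := Y - V solves D' = (Pi_W0 o S0) D with D(0) = 0, and
   Gronwall's inequality for |D|^2 gives D = 0.  Finally Exp_W0 inverts
   q |-> Pi_W0 log(q / W0), hence W = Exp_W0(Y) = Exp_W0(V). *)

Section MatrixDerive.
Context {R : realType} {m n : nat}.
Implicit Types (t : R) (M : R -> 'M[R]_(m, n)) (L : {linear 'M[R]_(m, n) -> 'M[R]_(m, n)}).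

Lemma is_derive_mxP M t (M' : 'M[R]_(m, n)) :
  is_derive t (1 : R) M M' <-> forall i j, is_derive t (1 : R) (fun x => M x i j) (M' i j).
Proof.
split=> [[dM <-] i j | dM].
  have dMij := (derivable_mxP M t 1).1 dM i j.
  by apply: DeriveDef => //; rewrite derive_mx // mxE.
have dM' : derivable M t 1 by apply/derivable_mxP => i j; case: (dM i j).
apply: DeriveDef => //; apply/matrixP => i j.
by rewrite derive_mx // mxE; have [_ ->] := dM i j.
Qed.

Lemma linear_mx_entry L X i j :
  L X i j = \sum_k \sum_l X k l * L (delta_mx k l) i j.
Proof.
rewrite {1}(matrix_sum_delta X) linear_sum summxE; apply: eq_bigr => k _.
rewrite linear_sum summxE; apply: eq_bigr => l _.
by rewrite linearZ mxE.
Qed.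

Lemma is_derive_linear_mx L {M t} {M' : 'M[R]_(m, n)} :
  is_derive t (1 : R) M M' -> is_derive t (1 : R) (L \o M) (L M').
Proof.
move=> /is_derive_mxP dM; apply/is_derive_mxP => i j.
have -> : (fun x => (L \o M) x i j) =
    \sum_k \sum_l (fun x => L (delta_mx k l) i j *: M x k l).
  apply/funext => x; rewrite /= linear_mx_entry fct_sumE.
  by apply: eq_bigr => k _; rewrite fct_sumE; apply: eq_bigr => l _; rewrite mulrC.
apply: is_derive_eq (is_derive_sum (fun k => is_derive_sum (fun l =>
  is_deriveZ (L (delta_mx k l) i j) (dM k l)))) _.
by rewrite linear_mx_entry; apply: eq_bigr => k _; apply: eq_bigr => l _; rewrite mulrC.
Qed.

End MatrixDerive.

Section Gronwall.
Context {R : realType}.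
Implicit Types (f : R -> R) (a b c K u v x : R).

Lemma is_derive_mul_expR f c x : derivable f x 1 ->
  is_derive x (1 : R) (fun y => f y * expR (c * y))
    (('D_1 f x + c * f x) * expR (c * x)).
Proof.
move=> /derivableP df.
have dl : is_derive x (1 : R) (fun y => c * y) c.
  exact: is_derive_eq (is_deriveZ c (is_derive_id x 1)) (mulr1 c).
have de := is_derive1_comp (is_derive_expR (c * x)) dl.
by apply: is_derive_eq (is_deriveM df de) _; rewrite /GRing.scale /=; ring.
Qed.

Lemma gronwall_forward f K u v : u <= v ->
  {in `[u, v], forall x, derivable f x 1} ->
  {in `]u, v[, forall x, 'D_1 f x <= K * f x} ->
  f v <= f u * expR (K * (v - u)).
Proof.
move=> uv df dfK.
pose g y := f y * expR (- K * y).
have dg x : x \in `[u, v] -> is_derive x (1 : R) g (('D_1 f x - K * f x) * expR (- K * x)).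
  by move=> /df; rewrite -mulNr; apply: is_derive_mul_expR.
have ouv : {subset `]u, v[ <= `[u, v]} by apply: subset_itv_oo_cc.
have u_in : u \in `[u, v] by rewrite in_itv /= lexx uv.
have v_in : v \in `[u, v] by rewrite in_itv /= lexx uv.
have dg' : {in `[u, v], forall x, derivable g x 1} by move=> x /dg [].
have gvu : g v <= g u.
  apply: (ler0_derive1_le_cc _ _ (derivable_within_continuous dg')) => //.
  - by move=> x /ouv /dg'.
  - move=> x ux; rewrite derive1E; have [_ ->] := dg x (ouv x ux).
    by rewrite pmulr_lle0 ?expR_gt0 // subr_le0 dfK.
have fg y : f y = g y * expR (K * y).
  by rewrite /g -mulrA -expRD mulNr addNr expR0 mulr1.
rewrite (fg v) (fg u) -mulrA -expRD.
have -> : K * u + K * (v - u) = K * v by ring.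
by rewrite ler_pM2r ?expR_gt0.
Qed.

Lemma gronwall_backward f K u v : u <= v ->
  {in `[u, v], forall x, derivable f x 1} ->
  {in `]u, v[, forall x, - 'D_1 f x <= K * f x} ->
  f u <= f v * expR (K * (v - u)).
Proof.
move=> uv df dfK.
pose g y := f y * expR (K * y).
have dg x : x \in `[u, v] -> is_derive x (1 : R) g (('D_1 f x + K * f x) * expR (K * x)).
  by move=> /df; apply: is_derive_mul_expR.
have ouv : {subset `]u, v[ <= `[u, v]} by apply: subset_itv_oo_cc.
have u_in : u \in `[u, v] by rewrite in_itv /= lexx uv.
have v_in : v \in `[u, v] by rewrite in_itv /= lexx uv.
have dg' : {in `[u, v], forall x, derivable g x 1} by move=> x /dg [].
have guv : g u <= g v.
  apply: (ger0_derive1_le_cc _ _ (derivable_within_continuous dg')) => //.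
  - by move=> x /ouv /dg'.
  - move=> x ux; rewrite derive1E; have [_ ->] := dg x (ouv x ux).
    by rewrite pmulr_lge0 ?expR_gt0 // addrC -lerBlDr sub0r dfK.
have fg y : f y = g y * expR (- K * y).
  by rewrite /g -mulrA -expRD mulNr addrN expR0 mulr1.
rewrite (fg v) (fg u) -mulrA -expRD.
have -> : - K * v + K * (v - u) = - K * u by ring.
by rewrite ler_pM2r ?expR_gt0.
Qed.

Lemma gronwall_eq0 f K a b : a < 0 < b ->
  {in `]a, b[, forall x, derivable f x 1} ->
  {in `]a, b[, forall x, `|'D_1 f x| <= K * f x} ->
  {in `]a, b[, forall x, 0 <= f x} -> f 0 = 0 ->
  {in `]a, b[, forall t, f t = 0}.
Proof.
move=> /andP[a0 b0] df dfK f_ge0 f00 t tab.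
have [ta tb] : a < t /\ t < b by move: tab; rewrite in_itv /= => /andP.
have sub u v : a < u -> v < b -> {subset `[u, v] <= `]a, b[}.
  move=> au vb x; rewrite !in_itv /= => /andP[ux xv].
  by rewrite (lt_le_trans au ux) (le_lt_trans xv vb).
apply/eqP; rewrite eq_le f_ge0 // andbT.
have [t0 | t0] := leP 0 t.
- have := gronwall_forward f K 0 t t0 (fun x ux => df x (sub _ _ a0 tb x ux)).
  rewrite f00 mul0r; apply=> x /subset_itv_oo_cc /(sub _ _ a0 tb) xab.
  exact: le_trans (ler_norm _) (dfK x xab).
- have := gronwall_backward f K t 0 (ltW t0) (fun x ux => df x (sub _ _ ta b0 x ux)).
  rewrite f00 mul0r; apply=> x /subset_itv_oo_cc /(sub _ _ ta b0) xab.
  by apply: le_trans (dfK x xab); rewrite -normrN ler_norm.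
Qed.

End Gronwall.

Section LinearODE.
Context {R : realType} {m n : nat}.
Implicit Types (M : 'M[R]_(m, n)) (L : {linear 'M[R]_(m, n) -> 'M[R]_(m, n)}).

Definition mxsqnorm M := \sum_i \sum_j M i j ^+ 2.

Lemma mxsqnorm_ge0 M : 0 <= mxsqnorm M.
Proof. by apply: sumr_ge0 => i _; apply: sumr_ge0 => j _; apply: sqr_ge0. Qed.

Lemma mxsqnorm_eq0 M : mxsqnorm M = 0 -> M = 0.
Proof.
move=> M0; apply/matrixP => i j; rewrite mxE; apply/eqP; rewrite -sqrf_eq0.
have Mi0 := psumr_eq0P (fun i _ => sumr_ge0 _ (fun j _ => sqr_ge0 (M i j))) M0.
by rewrite (psumr_eq0P (fun j _ => sqr_ge0 (M i j)) (Mi0 i isT)).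
Qed.

Lemma ler_sqr_mxsqnorm M i j : M i j ^+ 2 <= mxsqnorm M.
Proof.
have sq_ge0 k l : 0 <= M k l ^+ 2 by apply: sqr_ge0.
rewrite /mxsqnorm (bigD1 i) //= (bigD1 j) //= -addrA lerDl.
by apply: addr_ge0; apply: sumr_ge0 => *; [| apply: sumr_ge0 => *].
Qed.

Lemma ler_mul_mxsqnorm M i j k l : `|M i j * M k l| <= mxsqnorm M.
Proof.
have := ler_sqr_mxsqnorm M i j; have := ler_sqr_mxsqnorm M k l.
rewrite normrM -(real_normK (num_real (M i j))) -(real_normK (num_real (M k l))).
have := sqr_ge0 (`|M i j| - `|M k l|); nra.
Qed.

Lemma linear_mxdot_bound L : exists K, forall M,
  `|\sum_i \sum_j M i j * L M i j| <= K * mxsqnorm M.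
Proof.
exists (\sum_i \sum_j \sum_k \sum_l `|L (delta_mx k l) i j|) => M.
rewrite mulr_suml; apply: le_trans (ler_norm_sum _ _ _) _; apply: ler_sum => i _.
rewrite mulr_suml; apply: le_trans (ler_norm_sum _ _ _) _; apply: ler_sum => j _.
rewrite linear_mx_entry mulr_sumr mulr_suml.
apply: le_trans (ler_norm_sum _ _ _) _; apply: ler_sum => k _.
rewrite mulr_sumr mulr_suml.
apply: le_trans (ler_norm_sum _ _ _) _; apply: ler_sum => l _.
rewrite mulrA normrM mulrC ler_wpM2l //; exact: ler_mul_mxsqnorm.
Qed.

Lemma is_derive_mxsqnorm (D : R -> 'M[R]_(m, n)) t (D' : 'M[R]_(m, n)) :
  is_derive t (1 : R) D D' ->
  is_derive t (1 : R) (mxsqnorm \o D) (2 * \sum_i \sum_j D t i j * D' i j).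
Proof.
move=> /is_derive_mxP dD.
have -> : mxsqnorm \o D = \sum_i \sum_j (fun x => D x i j ^+ 2).
  apply/funext => x; rewrite /= /mxsqnorm fct_sumE.
  by apply: eq_bigr => i _; rewrite fct_sumE.
apply: is_derive_eq (is_derive_sum (fun i => is_derive_sum (fun j =>
  is_deriveX 2 (dD i j)))) _.
rewrite mulr_sumr; apply: eq_bigr => i _; rewrite mulr_sumr; apply: eq_bigr => j _.
by rewrite /GRing.scale /= expr1 mulrA.
Qed.

Lemma linear_ode_uniq L (D : R -> 'M[R]_(m, n)) {a b} : a < 0 < b ->
  {in `]a, b[, forall t, is_derive t (1 : R) D (L (D t))} -> D 0 = 0 ->
  {in `]a, b[, forall t, D t = 0}.
Proof.
move=> ab dD D00 t tab; apply: mxsqnorm_eq0.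
have [K LK] := linear_mxdot_bound L.
have df x : x \in `]a, b[ -> is_derive x (1 : R) (mxsqnorm \o D)
    (2 * \sum_i \sum_j D x i j * L (D x) i j).
  by move=> /dD; apply: is_derive_mxsqnorm.
apply: (@gronwall_eq0 _ (mxsqnorm \o D) (2 * K) a b ab _ _ _ _ t tab).
- by move=> x /df [].
- move=> x /df [_ ->]; rewrite normrM ger0_norm // -mulrA ler_wpM2l //.
- by move=> x _; apply: mxsqnorm_ge0.
- by rewrite /= D00; apply: big1 => i _; apply: big1 => j _; rewrite mxE expr0n.
Qed.

End LinearODE.

Section AssignmentFlow.
Context {R : realType} {m n : nat}.
Implicit Types (W Z : 'M[R]_(m, n)) (S : 'M[R]_(m * n)).

Lemma in_assign_gt0 {W} : in_assign W -> forall i j, 0 < W i j.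
Proof. by move=> W_assign i j; have [/(_ j)] := W_assign i; rewrite mxE. Qed.

Lemma in_assign_rowsum {W} : in_assign W -> forall i, \sum_j W i j = 1.
Proof.
move=> W_assign i; have [_ <-] := W_assign i.
by apply: eq_bigr => j _; rewrite mxE.
Qed.

Lemma PiW_is_linear W : linear (PiW W).
Proof.
move=> c Z1 Z2; apply/matrixP => i j; rewrite !mxE.
under eq_bigr do rewrite !mxE mulrDr mulrCA.
by rewrite big_split /= -mulr_sumr; ring.
Qed.

HB.instance Definition _ W :=
  GRing.isLinear.Build R 'M[R]_(m, n) 'M[R]_(m, n) _ (PiW W) (PiW_is_linear W).

Lemma applyS_is_linear S : linear (applyS S).
Proof. by move=> c X Y; rewrite /applyS !linearP /= mulmxDl -scalemxAl linearP. Qed.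

HB.instance Definition _ S :=
  GRing.isLinear.Build R 'M[R]_(m, n) 'M[R]_(m, n) _ (applyS S) (applyS_is_linear S).

Lemma PiW_tangent0 W Z : (forall i, \sum_j W i j = 1) -> in_tangent0 (PiW W Z).
Proof.
move=> W1 i; under eq_bigr do rewrite mxE.
by rewrite sumrB -mulr_suml W1 mul1r subrr.
Qed.

Lemma PiW_sub_rowconst {W} Z (c : 'I_m -> R) : (forall i, \sum_j W i j = 1) ->
  PiW W (\matrix_(i, j) (Z i j - c i)) = PiW W Z.
Proof.
move=> W1; apply/matrixP => i j; rewrite !mxE.
under eq_bigr do rewrite mxE mulrBr.
by rewrite sumrB -mulr_suml W1 mul1r; ring.
Qed.

Lemma PiW_divW W Z i j : 0 < W i j ->
  PiW W Z i j / W i j = Z i j - \sum_k W i k * Z i k.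
Proof. by move=> Wij_gt0; rewrite mxE; field; rewrite gt_eqF. Qed.

Lemma logratio_id W : (forall i j, 0 < W i j) -> logratio W W = 0.
Proof. by move=> W_gt0; apply/matrixP => i j; rewrite !mxE divff ?ln1 // gt_eqF. Qed.

Lemma is_derive_logratio {W : R -> 'M[R]_(m, n)} {W0 t W'} :
  (forall i j, 0 < W0 i j) -> (forall i j, 0 < W t i j) ->
  is_derive t (1 : R) W W' ->
  is_derive t (1 : R) (fun x => logratio (W x) W0) (\matrix_(i, j) (W' i j / W t i j)).
Proof.
move=> W0_gt0 Wt_gt0 /is_derive_mxP dW; apply/is_derive_mxP => i j.
pose r := (W0 i j)^-1 \*: (fun x => W x i j).
have -> : (fun x => logratio (W x) W0 i j) = @ln R \o r.
  by apply/funext => x; rewrite /= mxE mulrC.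
have r_gt0 : 0 < r t by rewrite /r /= /GRing.scale /= mulr_gt0 ?invr_gt0.
apply: is_derive_eq (@is_derive1_comp R (@ln R) r t _ _ (is_derive1_ln r_gt0)
  (is_deriveZ _ (dW i j))) _.
by rewrite mxE /r /= /GRing.scale /=; field; rewrite !gt_eqF.
Qed.

Lemma is_derive_PiW_logratio (W : R -> 'M[R]_(m, n)) W0 t Z :
  in_assign W0 -> in_assign (W t) -> is_derive t (1 : R) W (PiW (W t) Z) ->
  is_derive t (1 : R) (fun x => PiW W0 (logratio (W x) W0)) (PiW W0 Z).
Proof.
move=> W0_assign Wt_assign dW.
have Wt_gt0 := in_assign_gt0 Wt_assign.
apply: is_derive_eq (is_derive_linear_mx (PiW W0)
  (is_derive_logratio (in_assign_gt0 W0_assign) Wt_gt0 dW)) _.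
rewrite -(PiW_sub_rowconst Z (fun i => \sum_k W t i k * Z i k) (in_assign_rowsum W0_assign)).
by congr (PiW _ _); apply/matrixP => i j; rewrite [LHS]mxE [RHS]mxE PiW_divW.
Qed.

Lemma ExpW_PiW_logratio W0 W : in_assign W0 -> in_assign W ->
  ExpW W0 (PiW W0 (logratio W W0)) = W.
Proof.
move=> W0_assign W_assign; have W0_gt0 := in_assign_gt0 W0_assign.
have W_gt0 := in_assign_gt0 W_assign.
apply/matrixP => i j; rewrite mxE.
pose c := \sum_k W0 i k * ln (W i k / W0 i k).
have expW0 k : W0 i k * expR (PiW W0 (logratio W W0) i k / W0 i k) = W i k * expR (- c).
  rewrite PiW_divW // mxE expRD lnK ?posrE ?divr_gt0 //.
  under [X in - X]eq_bigr do rewrite mxE.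
  by field; rewrite gt_eqF.
rewrite expW0 (eq_bigr _ (fun k _ => expW0 k)) -mulr_suml.
by rewrite (in_assign_rowsum W_assign) mul1r mulfK // gt_eqF // expR_gt0.
Qed.

End AssignmentFlow.

Theorem proposition4p2 (R : realType) (m n : nat)
  (W0 s0 : 'M[R]_(m, n)) (S0 : 'M[R]_(m * n))
  (a b : R) (W V : R -> 'M[R]_(m, n)) :
  in_assign W0 ->
  a < 0 < b ->
  (* W solves the linear assignment flow on ]a, b[ with W(0) = W0 *)
  (forall t : R, a < t < b ->
     in_assign (W t) /\
     is_derive t (1 : R) W (PiW (W t) (s0 + applyS S0 (PiW W0 (logratio (W t) W0))))) ->
  W 0 = W0 ->
  (* V solves the linear ODE  V' = Pi_{W0}(s0 + S0 V), V(0) = 0 *)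
  (forall t, is_derive t (1 : R) V (PiW W0 (s0 + applyS S0 (V t)))) ->
  V 0 = 0 ->
  forall t : R, a < t < b -> in_tangent0 (V t) /\ W t = ExpW W0 (V t).
Proof.
move=> W0_assign ab dW W00 dV V00 t tab.
pose Y x := PiW W0 (logratio (W x) W0).
have dY x : a < x < b -> is_derive x (1 : R) Y (PiW W0 (s0 + applyS S0 (Y x))).
  by move=> /dW [Wx_assign dWx]; apply: is_derive_PiW_logratio dWx.
have YV : {in `]a, b[, forall x, Y x - V x = 0}.
  apply: (linear_ode_uniq (PiW W0 \o applyS S0) (fun x => Y x - V x) ab).
  - move=> x; rewrite in_itv => /dY dYx.
    apply: is_derive_eq (is_deriveB dYx (dV x)) _.
    by rewrite /= -linearB opprD addrACA subrr add0r [in RHS]linearB.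
  - by rewrite /Y W00 logratio_id ?linear0 ?V00 ?subr0 //; apply: in_assign_gt0.
have -> : V t = Y t by apply/esym/eqP; rewrite -subr_eq0 YV ?in_itv.
split; first exact/PiW_tangent0/(in_assign_rowsum W0_assign).
by rewrite ExpW_PiW_logratio //; case: (dW t tab).
Qed.
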